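(* Let $q$ be a prime power and let $ER(q)$ be the Erdős–Rényi graph. Then every independent set $S$ of $ER(q)$ satisfies \[ |S|\le \frac{\sqrt q+\sqrt{q+4(q+1)\frac{q+\sqrt q+1}{q^2+q+1}}}{2\,\frac{q+\sqrt q+1}{q^2+q+1}}. \]
   Context: Let $V=\mathbb F_q^3$. The vertices of $ER(q)$ are the $q^2+q+1$ one-dimensional subspaces of $V$ (points of $PG(2,q)$); points spanned by $x$ and $y$ are adjacent iff $x^Ty=0$. The $q+1$ points with $x^Tx=0$ are adjacent to themselves (carry loops). An independent set is a set of vertices no two distinct members of which are adjacent; looped vertices may belong to it. *)

From HB Require Import structures.
From mathcomp Require Import all_boot all_order all_algebra all_field.
Set Implicit Arguments. Unset Strict Implicit. Unset Printing Implicit Defensive.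
Import Order.TTheory GRing.Theory Num.Theory.
Local Open Scope ring_scope.

(* V = F^3 as row vectors; a one-dimensional subspace is represented by its
   canonical row-space matrix <<v>>%MS (v <> 0), so distinct subspaces are
   distinct elements of 'M[F]_3. *)
Definition ER_points (F : finFieldType) : {set 'M[F]_3} :=
  [set (<<v>>%MS : 'M[F]_3) | v in [set v : 'rV[F]_3 | v != 0]].

Definition ER_adj (F : finFieldType) (U W : 'M[F]_3) : bool :=
  [exists x : 'rV[F]_3, exists y : 'rV[F]_3,
     [&& x != 0, y != 0, (<<x>>%MS == U), (<<y>>%MS == W) &
         (x *m y^T == 0)]].

(* independent set: a set of vertices, no two distinct members adjacent
   (looped vertices allowed) *)
Definition ER_independent (F : finFieldType) (S : {set 'M[F]_3}) : Prop :=
  S \subset ER_points F /\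
  forall U W, U \in S -> W \in S -> U != W -> ~~ ER_adj U W.

Definition ER_ratio (R : rcfType) (q : R) : R :=
  (q + Num.sqrt q + 1) / (q ^+ 2 + q + 1).

Definition ER_bound (R : rcfType) (q : R) : R :=
  (Num.sqrt q + Num.sqrt (q + 4 * (q + 1) * ER_ratio q)) / (2 * ER_ratio q).

From HB Require Import structures.
From mathcomp Require Import all_boot all_order all_algebra all_field.
From mathcomp Require Import mxabelem.
From mathcomp Require Import zify ring lra.
Import Order.TTheory GRing.Theory Num.Theory.
Set Implicit Arguments. Unset Strict Implicit. Unset Printing Implicit Defensive.
Local Open Scope ring_scope.

(* Let X be the set of nonzero vectors spanning the points of S, so that
   |X| = s (q - 1) with s = |S|, and for a nonzero vector v let D v be the
   number of x in X orthogonal to v.  Double counting gives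
   sum D = |X| (q^2 - 1) and sum D^2 = |X| (q - 1) (|X| + q (q - 1)), the
   sums ranging over the q^3 - 1 nonzero vectors.  Independence of S forces
   D v = 0 for non-isotropic v in X and D v <= q - 1 for isotropic ones, of
   which there are at most q^2 - 1, so sum_(v in X) D v <= (q - 1) (q^2 - 1).
   Expanding 0 <= sum_v (D v + t [v in X] - c)^2 with t = (q - 1) sqrt q and
   c = (q - 1) r s, r = ER_ratio q, leaves r s^2 - sqrt q s - (q + 1) <= 0,
   and the bound is the larger root of this quadratic. *)

Lemma sum_nat_bool (T : finType) (P Q : pred T) :
  (\sum_(x | P x) (Q x : nat) = #|[set x | P x && Q x]|)%N.
Proof. by rewrite -sum1dep_card big_mkcondr /=; apply: eq_bigr => x _; case: (Q x). Qed.

Section PlaneGeometry.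
Variable F : finFieldType.
Local Notation q := #|F|.
Implicit Types (x y z u v w : 'rV[F]_3).

Definition dot x y : F := (x *m y^T) 0 0.

Lemma dot_eq0 x y : (x *m y^T == 0) = (dot x y == 0).
Proof.
rewrite /dot; apply/eqP/eqP => [->|xy0]; first by rewrite mxE.
by apply/matrixP => i j; rewrite !ord1 xy0 mxE.
Qed.

Lemma dotC x y : dot x y = dot y x.
Proof. by rewrite /dot !mxE; apply: eq_bigr => j _; rewrite !mxE mulrC. Qed.

Lemma mul_tr_eq0C x y : (x *m y^T == 0) = (y *m x^T == 0).
Proof. by rewrite !dot_eq0 dotC. Qed.

Lemma dotZl a x y : dot (a *: x) y = a * dot x y.
Proof. by rewrite /dot -scalemxAl mxE. Qed.

Lemma dotZr a x y : dot x (a *: y) = a * dot x y.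
Proof. by rewrite dotC dotZl dotC. Qed.

Lemma dotBl x y z : dot (x - y) z = dot x z - dot y z.
Proof. by rewrite /dot mulmxBl !mxE. Qed.

Lemma dotBr x y z : dot x (y - z) = dot x y - dot x z.
Proof. by rewrite dotC dotBl !(dotC x). Qed.

Lemma genmx_rV_eq x u : x != 0 -> u != 0 -> (<<x>>%MS == <<u>>%MS) = (x <= u)%MS.
Proof.
move=> nx nu; apply/eqP/idP => [xu|sxu]; first by rewrite -(genmxE u) -xu genmxE.
by apply/genmxP; have [_ <-] := mxrank_leqif_eq sxu; rewrite !rank_rV nx nu.
Qed.

Lemma rank_col_mx_rV x y : x != 0 -> y != 0 ->
  \rank (col_mx x y) = if <<x>>%MS == <<y>>%MS then 1%N else 2%N.
Proof.
move=> nx ny; rewrite -addsmxE eq_sym genmx_rV_eq //.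
have [] := mxrank_leqif_sup (addsmxSl x y).
rewrite rank_rV nx addsmx_sub submx_refl /= => le_x_xy eq_x_xy.
have le_xy2 : (\rank (x + y)%MS <= 2)%N by rewrite addsmxE (leq_trans (rank_leq_row _)).
by case: (y <= x)%MS eq_x_xy => [/eqP | /negbT/eqP]; lia.
Qed.

Lemma card_nonzero_ker k (B : 'M[F]_(3, k)) :
  #|[set v : 'rV[F]_3 | (v != 0) && (v *m B == 0)]| = (q ^ (3 - \rank B) - 1)%N.
Proof.
rewrite -mxrank_ker -(card_rowg (kermx B)) (cardsD1 0 (rowg (kermx B))).
rewrite inE sub0mx add1n subSS subn0.
by apply: eq_card => v; rewrite !inE sub_kermx.
Qed.

Lemma card_nonzero_rV : #|[set~ (0 : 'rV[F]_3)]| = (q ^ 3 - 1)%N.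
Proof. by rewrite cardsC1 card_mx mul1n subn1. Qed.

Lemma card_line u : u != 0 -> #|[set x : 'rV[F]_3 | (x != 0) && (x <= u)%MS]| = (q - 1)%N.
Proof.
move=> nu; have := cardsD1 0 (rowg u).
rewrite card_rowg rank_rV nu inE sub0mx expn1 add1n => ->; rewrite subSS subn0.
by apply: eq_card => x; rewrite !inE.
Qed.

Lemma card_orth x : x != 0 ->
  #|[set v : 'rV[F]_3 | (v != 0) && (x *m v^T == 0)]| = (q ^ 2 - 1)%N.
Proof.
move=> nx; have := card_nonzero_ker x^T; rewrite mxrank_tr rank_rV nx => <-.
by apply: eq_card => v; rewrite !inE mul_tr_eq0C.
Qed.

Lemma card_orth2 x y : x != 0 -> y != 0 ->
  #|[set v : 'rV[F]_3 | [&& v != 0, x *m v^T == 0 & y *m v^T == 0]]| =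
  ((q - 1) * (1 + (<<x>>%MS == <<y>>%MS) * q))%N.
Proof.
move=> nx ny; have := card_nonzero_ker (col_mx x y)^T.
rewrite mxrank_tr rank_col_mx_rV //.
have -> : [set v : 'rV[F]_3 | (v != 0) && (v *m (col_mx x y)^T == 0)] =
          [set v | [&& v != 0, x *m v^T == 0 & y *m v^T == 0]].
  apply/setP => v; rewrite !inE tr_col_mx mul_mx_row row_mx_eq0.
  by rewrite !(mul_tr_eq0C v).
move=> ->; case: ifP => _.
  by rewrite mul1n addnC -(subn_sqr q 1).
by rewrite mul0n addn0 muln1 expn1.
Qed.

Lemma exists_orth_notin_line p : p != 0 -> exists2 w, dot w p = 0 & ~~ (w <= p)%MS.
Proof.
move=> np; have : ~~ (kermx p^T <= p)%MS.
  by apply/negP => /mxrankS; rewrite mxrank_ker mxrank_tr rank_rV np.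
case/row_subPn => i wNp; exists (row i (kermx p^T)) => //.
by apply/eqP; rewrite -dot_eq0 -sub_kermx row_sub.
Qed.

Lemma common_orth_sub x y z w : x != 0 -> ~~ (y <= x)%MS -> z != 0 ->
  dot z x = 0 -> dot z y = 0 -> dot w x = 0 -> dot w y = 0 -> (w <= z)%MS.
Proof.
move=> nx yNx nz zx zy wx wy; set K := kermx (col_mx x y)^T.
have ny : y != 0 by apply: contraNneq yNx => ->; rewrite sub0mx.
have rankK : \rank K = 1%N.
  by rewrite mxrank_ker mxrank_tr rank_col_mx_rV // eq_sym genmx_rV_eq // (negbTE yNx).
have subK v : dot v x = 0 -> dot v y = 0 -> (v <= K)%MS.
  move=> vx vy; rewrite sub_kermx tr_col_mx mul_mx_row row_mx_eq0.
  by rewrite !dot_eq0 vx vy eqxx.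
have [_] := mxrank_leqif_eq (subK z zx zy); rewrite rank_rV nz rankK eqxx.
by move=> /esym/andP[_ Kz]; apply: submx_trans (subK w wx wy) Kz.
Qed.

Lemma dot_self_pchar2 v : 2 \in [pchar F] -> dot v v = dot v (const_mx 1) ^+ 2.
Proof.
move=> ch2; rewrite /dot !mxE -(pFrobenius_autE ch2) rmorph_sum.
by apply: eq_bigr => i _; rewrite !mxE mulr1.
Qed.

Section IsotropicSets.
Variable A : {set 'rV[F]_3}.
Hypothesis isoA : {in A, forall v, v != 0 /\ dot v v = 0}.

Lemma card_isotropic_pchar2 : 2 \in [pchar F] -> (#|A| <= q ^ 2 - 1)%N.
Proof.
move=> ch2; pose j : 'rV[F]_3 := const_mx 1.
have nj : j != 0 by apply/eqP => /rowP/(_ 0)/eqP; rewrite !mxE oner_eq0.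
have := card_nonzero_ker j^T; rewrite mxrank_tr rank_rV nj => <-.
apply: subset_leq_card; apply/subsetP => v /isoA[nv vv].
by rewrite inE nv dot_eq0 -(expf_eq0 _ 2) -dot_self_pchar2 // vv.
Qed.

Hypothesis orthA : {in A &, forall v w, dot v w = 0 -> (v <= w)%MS}.

Lemma card_isotropic_odd : 2 \notin [pchar F] -> (#|A| <= q ^ 2 - 1)%N.
Proof.
move=> ch2; have two : (2%:R : F) != 0 by move: ch2; rewrite inE.
have [->|[p pA]] := set_0Vmem A; first by rewrite cards0.
have [np pp] := isoA pA.
have [w wp wNp] := exists_orth_notin_line np.
pose L := [set x : 'rV[F]_3 | (x <= p)%MS].
have card_on : (#|A :&: L| <= q - 1)%N.
  rewrite -(card_line np); apply: subset_leq_card; apply/subsetP => x.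
  by rewrite !inE => /andP[/isoA[-> _] ->].
have offL v : v \in A :\: L -> v \in A /\ dot v p != 0.
  rewrite !inE => /andP[vNp vA]; split=> //.
  by apply: contraNneq vNp => vp; apply: orthA.
pose g v := (dot v p, dot v w).
(* Off the line of p, two isotropic vectors with the same image under g differ
   by some a *: p, and expanding the isotropy of the second one gives
   2 a (v . p) = 0. *)
have g_inj : {in A :\: L &, injective g}.
  move=> v v' /offL[vA vp] /offL[v'A _] [vpE vwE].
  have /sub_rVP[a ea] : (v - v' <= p)%MS.
    apply: (common_orth_sub np wNp np pp); rewrite ?(dotC p w) //.
      by rewrite dotBl vpE subrr.
    by rewrite dotBl vwE subrr.
  have v'E : v' = v - a *: p by rewrite -ea opprB addrC subrK.
  have : 2%:R * a * dot v p = 0.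
    have [_ vv] := isoA vA; have [_ v'v'] := isoA v'A.
    rewrite -oppr0 -v'v' v'E !(dotBl, dotBr, dotZl, dotZr) vv pp (dotC p v).
    ring.
  move/eqP; rewrite !mulf_eq0 (negbTE two) (negbTE vp) orbF /= => /eqP a0.
  by rewrite v'E a0 scale0r subr0.
have card_off : (#|A :\: L| <= (q - 1) * q)%N.
  have -> : ((q - 1) * q)%N = #|setX [set~ (0 : F)] [set: F]|.
    by rewrite cardsX cardsC1 cardsT subn1.
  rewrite -(card_in_imset g_inj); apply: subset_leq_card; apply/subsetP => vg.
  by case/imsetP => v /offL[_ vp] ->; rewrite !inE vp.
rewrite -(cardsID L A); apply: leq_trans (leq_add card_on card_off) _.
have := card_finNzRing_gt1 F; rewrite expnS expn1; nia.
Qed.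

Lemma card_isotropic_le : (#|A| <= q ^ 2 - 1)%N.
Proof.
by case: (boolP (2 \in [pchar F])); [exact: card_isotropic_pchar2 | exact: card_isotropic_odd].
Qed.

End IsotropicSets.

Section IndependentSet.
Variable S : {set 'M[F]_3}.

Definition cone : {set 'rV[F]_3} := [set x | (x != 0) && (<<x>>%MS \in S)].

Definition odeg v : nat := #|[set x in cone | x *m v^T == 0]|.

Lemma cone_neq0 x : x \in cone -> x != 0.
Proof. by rewrite inE => /andP[]. Qed.

Lemma cone_line x : x \in cone ->
  [set y in cone | <<y>>%MS == <<x>>%MS] = [set y | (y != 0) && (y <= x)%MS].
Proof.
rewrite inE => /andP[nx xS]; apply/setP => y; rewrite !inE.
case: (eqVneq y 0) => [->|ny] //=.
rewrite genmx_rV_eq //; case: (boolP (y <= x)%MS) => yx; rewrite ?andbF //.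
have /eqP-> : <<y>>%MS == <<x>>%MS by rewrite genmx_rV_eq.
by rewrite xS.
Qed.

Hypothesis indS : ER_independent S.

Lemma cone_orth_sub x y : x \in cone -> y \in cone -> dot x y = 0 -> (x <= y)%MS.
Proof.
case: indS => _ indep; rewrite !inE => /andP[nx xS] /andP[ny yS] xy.
have adj : ER_adj <<x>>%MS <<y>>%MS.
  by apply/existsP; exists x; apply/existsP; exists y; rewrite nx ny !eqxx dot_eq0 xy /=.
by rewrite -genmx_rV_eq //; apply: contraLR (indep _ _ xS yS) adj.
Qed.

Lemma card_cone : #|cone| = (#|S| * (q - 1))%N.
Proof.
case: indS => SP _; rewrite -sum1_card (partition_big (fun x => <<x>>%MS) (mem S)) /=.
  rewrite -sum_nat_const; apply: eq_bigr => U US.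
  have /imsetP[u] := subsetP SP U US; rewrite inE => nu defU.
  have uc : u \in cone by rewrite inE nu -defU.
  by rewrite sum1dep_card -(card_line nu) -(cone_line uc) defU.
by move=> x; rewrite inE => /andP[].
Qed.

Lemma odegE v : odeg v = (\sum_(x in cone) (x *m v^T == 0%R : nat))%N.
Proof. by rewrite sum_nat_bool. Qed.

Lemma sum_odeg :
  (\sum_(v in [set~ (0%R : 'rV[F]_3)]) odeg v = #|S| * (q - 1) * (q ^ 2 - 1))%N.
Proof.
under eq_bigr do rewrite odegE.
rewrite exchange_big /= -card_cone -sum_nat_const; apply: eq_bigr => x xc.
rewrite sum_nat_bool -(card_orth (cone_neq0 xc)).
by apply: eq_card => v; rewrite !inE.
Qed.

Lemma sum_odeg_sqr :
  (\sum_(v in [set~ (0%R : 'rV[F]_3)]) odeg v ^ 2 = #|S| * (q - 1) ^ 3 * (q + #|S|))%N.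
Proof.
have pair_sum x : x \in cone ->
    (\sum_(v in [set~ (0%R : 'rV[F]_3)])
       \sum_(y in cone) (x *m v^T == 0%R) * (y *m v^T == 0%R) =
     (q - 1) * (#|cone| + (q - 1) * q))%N.
  move=> xc; rewrite exchange_big /=.
  rewrite (eq_bigr (fun y => (q - 1) * (1 + (<<x>>%MS == <<y>>%MS) * q)))%N; last first.
    move=> y yc; rewrite -(card_orth2 (cone_neq0 xc) (cone_neq0 yc)).
    under eq_bigr do rewrite mulnb.
    by rewrite sum_nat_bool; apply: eq_card => v; rewrite !inE.
  rewrite -big_distrr /= big_split /= sum1_card -big_distrl /= sum_nat_bool.
  have -> : #|[set y : 'rV[F]_3 | (y \in cone) && (<<x>>%MS == <<y>>%MS)]| = (q - 1)%N.
    rewrite -(card_line (cone_neq0 xc)) -(cone_line xc).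
    by apply: eq_card => y; rewrite !inE (eq_sym <<x>>%MS).
  by [].
under eq_bigr do rewrite odegE expnS expn1 big_distrlr /=.
rewrite exchange_big /= (eq_bigr _ pair_sum) sum_nat_const card_cone.
by set m := (q - 1)%N; ring.
Qed.

Lemma odeg_cone_le v : v \in cone -> (odeg v <= (dot v v == 0%R) * (q - 1))%N.
Proof.
move=> vc; have nv := cone_neq0 vc.
have orth_sub x : x \in cone -> x *m v^T == 0 -> (x <= v)%MS.
  by move=> xc; rewrite dot_eq0 => /eqP; apply: cone_orth_sub.
have [vv|vv] := eqVneq (dot v v) 0; rewrite /= ?mul1n ?mul0n.
  rewrite -(card_line nv); apply: subset_leq_card; apply/subsetP => x.
  by case/setIdP => xc xv; rewrite inE (cone_neq0 xc) orth_sub.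
rewrite leqn0 cards_eq0; apply/eqP/setP => x.
rewrite in_set0; apply/negbTE/setIdP => -[xc xv].
have /sub_rVP[a xE] := orth_sub x xc xv.
move: xv; rewrite dot_eq0 xE dotZl mulf_eq0 (negbTE vv) orbF => /eqP a0.
by move: (cone_neq0 xc); rewrite xE a0 scale0r eqxx.
Qed.

Lemma sum_odeg_cone : (\sum_(v in cone) odeg v <= (q - 1) * (q ^ 2 - 1))%N.
Proof.
apply: (@leq_trans (\sum_(v in cone) (dot v v == 0%R) * (q - 1))).
  exact: leq_sum odeg_cone_le.
rewrite -big_distrl /= sum_nat_bool mulnC leq_mul2l card_isotropic_le ?orbT //.
  by move=> v /setIdP[vc /eqP vv]; rewrite (cone_neq0 vc).
by move=> v w /setIdP[vc _] /setIdP[wc _]; apply: cone_orth_sub.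
Qed.

End IndependentSet.

End PlaneGeometry.

Section RealAlgebra.
Variable R : rcfType.

Lemma quadratic_le_root (r b c s : R) : 0 < r ->
  r * s ^+ 2 - b * s - c <= 0 ->
  s <= (b + Num.sqrt (b ^+ 2 + 4 * c * r)) / (2 * r).
Proof.
move=> r0 hs.
have disc : (2 * r * s - b) ^+ 2 <= b ^+ 2 + 4 * c * r.
  rewrite -subr_ge0 (_ : _ - _ = 4 * (r * (c + b * s - r * s ^+ 2))); last by ring.
  by apply: mulr_ge0; [|apply: mulr_ge0 (ltW r0) _]; lra.
set d := Num.sqrt _.
have d0 : 0 <= d by apply: sqrtr_ge0.
have dd : d ^+ 2 = b ^+ 2 + 4 * c * r by rewrite sqr_sqrtr // (le_trans (sqr_ge0 _) disc).
rewrite ler_pdivlMr; last by nra.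
nra.
Qed.

Lemma second_moment_bound (I : finType) (P B : {set I}) (a : I -> R) (q s : R) :
  1 < q -> B \subset P ->
  #|P|%:R = q ^+ 3 - 1 -> #|B|%:R = s * (q - 1) ->
  \sum_(i in P) a i = s * (q - 1) * (q ^+ 2 - 1) ->
  \sum_(i in P) a i ^+ 2 = s * (q - 1) ^+ 3 * (q + s) ->
  \sum_(i in B) a i <= (q - 1) * (q ^+ 2 - 1) ->
  s <= ER_bound q.
Proof.
move=> q1 BP HP HB Ha Ha2 HaB.
have g0 : 0 < Num.sqrt q by rewrite sqrtr_gt0 (lt_trans ltr01 q1).
have qg : Num.sqrt q ^+ 2 = q by rewrite sqr_sqrtr // ltW // (lt_trans ltr01 q1).
rewrite /ER_bound /ER_ratio; move: (Num.sqrt q) g0 qg => g g0 qg.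
have den0 : 0 < q ^+ 2 + q + 1 by nra.
set r := (q + g + 1) / _; have r0 : 0 < r by rewrite divr_gt0 //; nra.
pose b i : R := (i \in B)%:R.
have restrictB f : \sum_(i in P) b i * f i = \sum_(i in B) f i.
  rewrite (big_setID B) /= (setIidPr BP) -[RHS]addr0; congr (_ + _).
    by apply: eq_bigr => i iB; rewrite /b iB mul1r.
  by rewrite big1 // => i; rewrite inE => /andP[/negbTE iB _]; rewrite /b iB mul0r.
set X := \sum_(i in B) a i.
(* These values of t and c make the expanded sum of squares factor as
   2 g (q - 1) (X + (q - 1)^2 (g s - r s^2)). *)
pose t := (q - 1) * g; pose c := (q - 1) * r * s.
have expand : \sum_(i in P) (a i + t * b i - c) ^+ 2 =
    \sum_(i in P) a i ^+ 2 + 2 * t * X - 2 * c * \sum_(i in P) a i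
    + (t ^+ 2 - 2 * t * c) * #|B|%:R + c ^+ 2 * #|P|%:R.
  have -> : #|B|%:R = \sum_(i in P) b i * 1 by rewrite restrictB sumr_const.
  rewrite /X -restrictB -sumr_const !mulr_sumr -sumrN -!big_split /=.
  by apply: eq_bigr => i _; rewrite /b; case: (i \in B) => /=; ring.
have nonneg : 0 <= 2 * g * (q - 1) * (X + (q - 1) ^+ 2 * (g * s - r * s ^+ 2)).
  have -> : 2 * g * (q - 1) * (X + (q - 1) ^+ 2 * (g * s - r * s ^+ 2)) =
      \sum_(i in P) (a i + t * b i - c) ^+ 2.
    rewrite expand Ha Ha2 HB HP /t /c /r -qg; field.
    by rewrite qg lt0r_neq0.
  by apply: sumr_ge0 => i _; apply: sqr_ge0.
have quad : r * s ^+ 2 - g * s - (q + 1) <= 0.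
  rewrite pmulr_rge0 in nonneg; last by rewrite !mulr_gt0 // subr_gt0.
  have : 0 <= (q - 1) * (q ^+ 2 - 1) - X + (X + (q - 1) ^+ 2 * (g * s - r * s ^+ 2)).
    by rewrite addr_ge0 // subr_ge0.
  rewrite (_ : _ + _ = (q - 1) ^+ 2 * (q + 1 + (g * s - r * s ^+ 2))); last by ring.
  rewrite pmulr_rge0; [lra | by rewrite exprn_gt0 // subr_gt0].
by have := quadratic_le_root r0 quad; rewrite qg.
Qed.

End RealAlgebra.

Theorem mainTheorem10 (F : finFieldType) (R : rcfType) (S : {set 'M[F]_3}) :
  ER_independent S ->
  (#|S|%:R : R) <= ER_bound (#|F|%:R : R).
Proof.
move=> indS; have q_gt0 := ltnW (card_finNzRing_gt1 F).
have natr_subn1 n : (0 < n)%N -> ((n - 1)%N%:R : R) = n%:R - 1 by move=> n0; rewrite natrB.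
apply: (second_moment_bound (P := [set~ 0]) (B := cone S) (a := fun v => (odeg S v)%:R)).
- by rewrite ltr1n card_finNzRing_gt1.
- by apply/subsetP => v /cone_neq0; rewrite !inE.
- by rewrite card_nonzero_rV natr_subn1 ?natrX ?expn_gt0 ?q_gt0.
- by rewrite card_cone // natrM natr_subn1.
- by rewrite -natr_sum sum_odeg // !natrM !natr_subn1 ?natrX ?expn_gt0 ?q_gt0.
- under eq_bigr do rewrite -natrX.
  by rewrite -natr_sum sum_odeg_sqr // !natrM natrD natr_subn1 //; ring.
- rewrite -natr_sum -natrX -!natr_subn1 ?expn_gt0 ?q_gt0 // -natrM ler_nat.
  exact: sum_odeg_cone.
Qed.
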